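(* Let $G=(U,V,E)$ be a bipartite graph with $|U|=|V|=N$ in which every vertex of $U$ has at least one neighbor, and run the matching algorithm on $G$. Let $i\ge0$ with $|M(i)|<N$, let $l$ be an integer, and let $u_0\in U$ be free with respect to $M(i)$ with $n_{u_0}\subseteq D_l(i)$. Let $u_1\in U$ be the endpoint of an alternating path $u_0,v,u_1$ of length $2$ with respect to $M(i)$, i.e. $v\in n_{u_0}$ and $(u_1,v)\in M(i)$. Then no $v'\in n_{u_1}$ lies in $D_{l-2}(i)\setminus D_{l-1}(i)$.
   Context: Matching algorithm. For $u\in U$ let $n_u=\{v\in V:(u,v)\in E\}$. The algorithm maintains a matching $M\subseteq E$ (initially empty) and an integer value $h_v$ for each $v\in V$ (initially $0$). A vertex is free if no edge of $M$ is incident to it. One iteration: choose any free $u\in U$ (arbitrary choice); choose $j\in\arg\min_{v\in n_u}h_v$ (ties broken arbitrarily); if some $u_{\rm old}\in U$ has $(u_{\rm old},j)\in M$, remove $(u_{\rm old},j)$ from $M$ (so $u_{\rm old}$ becomes free); add $(u,j)$ to $M$; increase $h_j$ by $1$. Iterations are repeated while $|M|<N$ and the algorithm terminates when $|M|=N$. $M(i)$ and $h_v(i)$ denote the matching and the values after the $i$-th iteration. For an integer $l$, $D_l(i)=\{v\in V: h_v(i)\ge l\}$. With respect to a matching $M$, an alternating path is a simple path in $G$ whose edges alternate between edges not in $M$ and edges in $M$; its length is its number of edges. *)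

From mathcomp Require Import all_boot all_order all_algebra.
Set Implicit Arguments. Unset Strict Implicit. Unset Printing Implicit Defensive.

(* A state of the algorithm is a pair
   (M, h) with M a set of edges (the matching) and h : V -> nat. *)

Section Alg.
Variables (U V : finType) (E : U -> V -> bool).

Definition nbr (u : U) : {set V} := [set v | E u v].

Definition state := ({set U * V} * {ffun V -> nat})%type.

Definition init_state : state := (set0, [ffun _ => 0%N]).

Definition freeU (M : {set U * V}) (u : U) : Prop :=
  forall v : V, (u, v) \notin M.

Definition step (N : nat) (s s' : state) : Prop :=
  (#|s.1| < N)%N /\
  exists u : U, exists j : V,
    [/\ freeU s.1 u,
        j \in nbr u,
        (forall v, v \in nbr u -> (s.2 j <= s.2 v)%N),
        s'.1 = (u, j) |: [set p in s.1 | p.2 != j]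
      & s'.2 = [ffun v => if v == j then (s.2 v).+1 else s.2 v]].

(* reach N i s : s = (M(i), h(i)) for some run of the algorithm
   (with arbitrary choices) after i iterations. *)
Inductive reach (N : nat) : nat -> state -> Prop :=
| reach0 : reach N 0 init_state
| reachS i s s' : reach N i s -> step N s s' -> reach N i.+1 s'.

Definition Dset (h : {ffun V -> nat}) (l : int) : {set V} :=
  [set v | (l <= (h v)%:Z)%R].
End Alg.

(* Every edge (u, j) of the matching satisfies the invariant
   h_j <= h_w + 1 for every neighbour w of u: when u is matched to j, the
   height of j is minimal among the neighbours of u and is then raised by
   exactly one; afterwards heights only increase, except that raising h_j
   itself removes every matching edge at j.  Hence this "near-minimality"
   holds at every reachable state.

   For the theorem, let (u1, v) be in M(i) with v a neighbour of u0, so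
   h_v >= l because n_{u0} is contained in D_l(i).  By the invariant every
   neighbour v' of u1 has h_v' >= h_v - 1 >= l - 1, i.e. v' lies in
   D_{l-1}(i) and therefore not in D_{l-2}(i) minus D_{l-1}(i). *)

From mathcomp Require Import all_boot all_order all_algebra.
From mathcomp Require Import zify.

Section Invariant.
Variables (U V : finType) (E : U -> V -> bool).

Definition near_minimal (s : state U V) : Prop :=
  forall u j, (u, j) \in s.1 -> forall w, E u w -> (s.2 j <= (s.2 w).+1)%N.

Lemma near_minimal_init : near_minimal (init_state U V).
Proof. by move=> u j /=; rewrite inE. Qed.

(* One iteration preserves the invariant: the new edge (u, j) has h_j
   minimal before the increment, and old edges avoid j, whose height is
   the only one that changes. *)
Lemma near_minimal_step (N : nat) (s s' : state U V) :
  near_minimal s -> step E N s s' -> near_minimal s'.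
Proof.
move=> inv [_ [u [j [_ _ hmin M' h']]]] u' j'.
rewrite M' h' !inE => /orP [/eqP [-> ->] | /andP [old_edge j'_ne_j]] w Ew.
  have := hmin w; rewrite inE => /(_ Ew).
  by rewrite !ffunE eqxx; case: eqP => _; lia.
rewrite !ffunE /= in j'_ne_j *; rewrite (negbTE j'_ne_j).
by have := inv _ _ old_edge w Ew; case: eqP => _; lia.
Qed.

Lemma near_minimal_reach (N i : nat) (s : state U V) :
  reach E N i s -> near_minimal s.
Proof.
elim=> [|k s0 s1 _ inv st]; first exact: near_minimal_init.
exact: near_minimal_step inv st.
Qed.

Lemma Dset_pred (h : {ffun V -> nat}) (l : int) (v w : V) :
  v \in Dset h l -> (h v <= (h w).+1)%N -> w \in Dset h (l - 1)%R.
Proof. by rewrite !inE => ? ?; lia. Qed.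

End Invariant.

Arguments near_minimal_reach {U V E N i s}.
Arguments Dset_pred {V h l v w}.

Theorem mainTheorem6 (U V : finType) (E : U -> V -> bool) (N : nat)
  (hU : #|U| = N) (hV : #|V| = N)
  (hnb : forall u : U, exists v : V, E u v)
  (i : nat) (M : {set U * V}) (h : {ffun V -> nat})
  (hreach : reach E N i (M, h))
  (hsize : (#|M| < N)%N)
  (l : int) (u0 : U)
  (hfree : freeU M u0)
  (hsub : nbr E u0 \subset Dset h l)
  (u1 : U) (v : V)
  (hv : v \in nbr E u0) (hm : (u1, v) \in M) :
  forall v' : V, v' \in nbr E u1 ->
    v' \notin (Dset h (l - 2)%R :\: Dset h (l - 1)%R).
Proof.
move=> v'; rewrite inE => Ev'.
have v_high : v \in Dset h l := subsetP hsub v hv.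
have v'_near : (h v <= (h v').+1)%N := near_minimal_reach hreach _ _ hm _ Ev'.
by rewrite inE (Dset_pred v_high v'_near).
Qed.
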